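(* Let $S$ be a group, $A$ a left $S$-act and $I$ a set with $|I|\ge 2$. Then $A^{(\ast)I}$ is geometrically equivalent to $A^{(\ast)2}=A_1\amalg A_2$, where $A_1=A=A_2$.
   Context: A left $S$-act is a nonempty set with an action $S\times A\to A$ satisfying $1a=a$, $(st)a=s(ta)$; homomorphisms preserve the action; $\amalg$ denotes coproduct (disjoint union), and $A^{(\ast)I}=\coprod_{i\in I}A_i$ with each $A_i=A$. For a nonempty finite set $X$, $F_X=\coprod_{x\in X}S_x$ is the free $S$-act on $X$. For an $S$-act $G$ and a relation $T\subseteq F_X\times F_X$, $T'_G=\{\mu:F_X\to G \text{ homomorphism}: T\subseteq\ker\mu\}$ and $T''_G=\bigcap_{\mu\in T'_G}\ker\mu$ (empty intersection $=F_X\times F_X$). $S$-acts $G_1,G_2$ are geometrically equivalent iff $T''_{G_1}=T''_{G_2}$ for all nonempty finite $X$ and all $T\subseteq F_X\times F_X$. *)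

From mathcomp Require Import all_boot.
Set Implicit Arguments.
Unset Strict Implicit.
Unset Printing Implicit Defensive.

Record group := Group {
  gcarrier :> Type;
  gmul : gcarrier -> gcarrier -> gcarrier;
  gone : gcarrier;
  ginv : gcarrier -> gcarrier;
  gmulA : forall x y z, gmul x (gmul y z) = gmul (gmul x y) z;
  gmul1g : forall x, gmul gone x = x;
  gmulg1 : forall x, gmul x gone = x;
  gmulVg : forall x, gmul (ginv x) x = gone;
  gmulgV : forall x, gmul x (ginv x) = gone
}.

(** A left S-act: a set with an action satisfying 1a = a and (st)a = s(ta).
    Nonemptiness is not a field; it is imposed as a hypothesis where needed. *)
Record act (S : group) := Act {
  acarrier :> Type;
  aop : S -> acarrier -> acarrier;
  aop1 : forall a, aop (gone S) a = a;
  aopM : forall s t a, aop (gmul s t) a = aop s (aop t a)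
}.

Arguments aop {S} a s x : rename.

Definition is_hom (S : group) (G H : act S) (f : G -> H) : Prop :=
  forall (s : S) (x : G), f (aop G s x) = aop H s (f x).

(** Coproduct (disjoint union) A^{( * )I} = coprod_{i in I} A_i with A_i = A,
    realised as I * A with action s(i,a) = (i, s a). *)
Definition coprod_act (S : group) (I : Type) (A : act S) : act S.
Proof.
refine (@Act S (I * A) (fun s p => (p.1, aop A s p.2)) _ _).
- by move=> [i a] /=; rewrite aop1.
- by move=> s t [i a] /=; rewrite aopM.
Defined.

(** The free S-act F_X = coprod_{x in X} S_x, realised as X * S with
    action s(x,t) = (x, s t). *)
Definition free_act (S : group) (X : Type) : act S.
Proof.
refine (@Act S (X * S) (fun s p => (p.1, gmul s p.2)) _ _).
- by move=> [x t] /=; rewrite gmul1g.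
- by move=> s t [x u] /=; rewrite gmulA.
Defined.

(** T''_G : intersection of the kernels of all homomorphisms mu : F_X -> G
    whose kernel contains T (the empty intersection being F_X x F_X). *)
Definition closure2 (S : group) (X : Type) (G : act S)
    (T : free_act S X -> free_act S X -> Prop) (u v : free_act S X) : Prop :=
  forall mu : free_act S X -> G,
    is_hom mu -> (forall p q, T p q -> mu p = mu q) -> mu u = mu v.

Definition geom_equiv (S : group) (G1 G2 : act S) : Prop :=
  forall (X : finType), 0 < #|X| ->
  forall (T : free_act S X -> free_act S X -> Prop) (u v : free_act S X),
    closure2 G1 T u v <-> closure2 G2 T u v.

From mathcomp Require Import all_boot.
From Stdlib Require Import ClassicalEpsilon.

Set Implicit Arguments.
Unset Strict Implicit.
Unset Printing Implicit Defensive.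

(* If homomorphisms G -> H separate the points of G, then the kernel of any
   homomorphism F_X -> G is the intersection of the kernels of its composites
   with them, so T''_H is contained in T''_G.
   Both A^{( * )I} and A^{( * )2} separate the points of each other through the
   homomorphisms relabelling the summands: into A^{( * )I} by an injection of
   the two labels, into A^{( * )2} by the indicator of a single label. *)

Section Separation.

Variable S : group.

Definition hom_separated (G H : act S) : Prop :=
  forall x y : G, (forall phi : G -> H, is_hom phi -> phi x = phi y) -> x = y.

Lemma closure2_separated (G H : act S) (X : Type)
    (T : free_act S X -> free_act S X -> Prop) (u v : free_act S X) :
  hom_separated G H -> closure2 H T u v -> closure2 G T u v.
Proof.
move=> sepGH clH mu mu_hom Tmu; apply: sepGH => phi phi_hom.
apply: (clH (fun p => phi (mu p))) => [s p | p q Tpq].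
  by rewrite mu_hom phi_hom.
by rewrite (Tmu p q Tpq).
Qed.

Lemma geom_equiv_separated (G H : act S) :
  hom_separated G H -> hom_separated H G -> geom_equiv G H.
Proof.
move=> sepGH sepHG X _ T u v.
by split; apply: closure2_separated.
Qed.

End Separation.

Section CoproductRelabelling.

Variables (S : group) (A : act S).

Definition coprod_relabel (I J : Type) (f : I -> J) :
  coprod_act I A -> coprod_act J A :=
  fun p => (f p.1, p.2).

Lemma coprod_relabel_hom (I J : Type) (f : I -> J) :
  is_hom (coprod_relabel f).
Proof. by move=> s [i a]. Qed.

Lemma coprod_separated (I J : Type) (j0 : J) :
  (forall i k : I, (forall f : I -> J, f i = f k) -> i = k) ->
  hom_separated (coprod_act I A) (coprod_act J A).
Proof.
move=> sepIJ [i a] [k b] sep.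
have -> : a = b by case: (sep _ (coprod_relabel_hom (fun _ : I => j0))).
congr pair; apply: sepIJ => f.
by have [] := sep _ (coprod_relabel_hom f).
Qed.

End CoproductRelabelling.

Lemma bool_separated_by_distinct (I : Type) (i j : I) :
  i <> j -> forall b c : bool, (forall f : bool -> I, f b = f c) -> b = c.
Proof.
move=> neq_ij b c /(_ (fun b => if b then i else j)).
by case: b; case: c => // eq_ij; case: neq_ij.
Qed.

Lemma separated_by_bool (I : Type) :
  forall i k : I, (forall f : I -> bool, f i = f k) -> i = k.
Proof.
move=> i k /(_ (fun x => if excluded_middle_informative (x = i) then true else false)).
by destruct (excluded_middle_informative (i = i));
  destruct (excluded_middle_informative (k = i)).
Qed.

Theorem proposition3p18 (S : group) (A : act S) (I : Type) :
  inhabited A ->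
  (exists i j : I, i <> j) ->
  geom_equiv (coprod_act I A) (coprod_act bool A).
Proof.
move=> _ [i [j neq_ij]]; apply: geom_equiv_separated.
- exact: coprod_separated true (@separated_by_bool I).
- exact: coprod_separated i (bool_separated_by_distinct neq_ij).
Qed.
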